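(* Let $i,j\in\{1,2\}$ and let $\varphi(x)$ be a formula of the correspondence language whose only free variable is $x$. Then $\varphi(x)$ is logically equivalent to $ST_{ij}(I,x)$ for some modal intuitionistic formula $I$ if and only if $\varphi(x)$ is invariant with respect to $(i,j)$-modal asimulations.
   Context: Correspondence language: classical first-order logic without identity over the vocabulary $\Sigma=\{R,R_\Box,R_\Diamond,P_1,P_2,\dots\}$, with $R,R_\Box,R_\Diamond$ binary and each $P_n$ unary; connectives $\bot,\to,\vee,\wedge$, quantifiers $\forall,\exists$. $\Theta$ denotes a subset of $\Sigma$ containing $R,R_\Box,R_\Diamond$; a $\Theta$-model $M=\langle U,\iota\rangle$ interprets the letters of $\Theta$. For $M_k=\langle U_k,\iota_k\rangle$ write $R_k=\iota_k(R)$, $R_{\Box k}=\iota_k(R_\Box)$, $R_{\Diamond k}=\iota_k(R_\Diamond)$. $\Sigma_\varphi=\{R,R_\Box,R_\Diamond\}\cup\{P_n:P_n\text{ occurs in }\varphi\}$. $M,a\models\varphi(x)$ means $\varphi$ holds under assignments sending $x$ to $a$; $a\models_k\varphi(x)$ abbreviates $M_k,a\models\varphi(x)$. $s\overset{\leftrightarrow}{A}t$ means $sAt$ and $tAs$. Modal intuitionistic formulas are built from letters $p_n$ and $\bot$ with $\wedge,\vee,\to,\Box,\Diamond$. For $i,j\in\{1,2\}$: $ST_{ij}(p_n,x)=P_n(x)$; $ST_{ij}(\bot,x)=\bot$; $ST_{ij}$ commutes with $\wedge,\vee$; $ST_{ij}(I\to J,x)=\forall y(R(x,y)\to(ST_{ij}(I,y)\to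 ST_{ij}(J,y)))$; $ST_{1j}(\Box I,x)=\forall y(R_\Box(x,y)\to ST_{1j}(I,y))$; $ST_{2j}(\Box I,x)=\forall y(R(x,y)\to\forall z(R_\Box(y,z)\to ST_{2j}(I,z)))$; $ST_{i1}(\Diamond I,x)=\exists y(R_\Diamond(x,y)\wedge ST_{i1}(I,y))$; $ST_{i2}(\Diamond I,x)=\forall y(R(x,y)\to\exists z(R_\Diamond(y,z)\wedge ST_{i2}(I,z)))$. Asimulation conditions, for pointed $\Theta$-models $(M_1,t),(M_2,u)$, required for all $i,j\in\{1,2\}$, $a,c,e\in U_i$, $b,d,f\in U_j$, unary $P\in\Theta$: (type) $A\subseteq(U_1\times U_2)\cup(U_2\times U_1)$; (B-type) same for $B$; (elem) $tAu$; (base) if $aAb$ and $a\models_iP(x)$ then $b\models_jP(x)$; (step) if $aAb$ and $bR_jd$ then there is $c\in U_i$ with $aR_ic$ and $c\overset{\leftrightarrow}{A}d$; (box-2) if $aAb$, $bR_jd$, $dR_{\Box j}f$ then there are $c,e\in U_i$ with $aR_ic$, $cR_{\Box i}e$, $eAf$; (box-1) if $aAb$ and $bR_{\Box j}d$ then there is $c\in U_i$ with $aR_{\Box i}c$ and $cAd$; (diam-1) if $aAb$ and $aR_{\Diamond i}c$ then there is $d\in U_j$ with $bR_{\Diamond j}d$ and $cAd$; (diam-2(1)) if $aAb$ and $bR_jd$ then there is $c\in U_i$ with $aR_ic$ and $cBd$; (diam-2(2)) if $aBb$ and $aR_{\Diamond i}c$ then there is $d\in U_j$ with $bR_{\Diamond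 j}d$ and $cAd$. A $(2,1)$-modal $\langle(M_1,t),(M_2,u)\rangle$-asimulation is a relation $A$ satisfying type, elem, base, step, box-2, diam-1; $(1,1)$-modal: $A$ satisfying type, elem, base, step, box-1, diam-1; $(2,2)$-modal: a pair $(A,B)$ satisfying type, B-type, elem, base, step, box-2, diam-2(1), diam-2(2); $(1,2)$-modal: a pair $(A,B)$ satisfying type, B-type, elem, base, step, box-1, diam-2(1), diam-2(2). $\varphi(x)$ is invariant with respect to $(i,j)$-modal asimulations iff for every $\Theta\supseteq\Sigma_\varphi$, all pointed $\Theta$-models $(M_1,t),(M_2,u)$, every $(i,j)$-modal $\langle(M_1,t),(M_2,u)\rangle$-asimulation (for $j=2$, its first component $A$ is used), and all $a\in U_1,b\in U_2$ with $aAb$: $a\models_1\varphi(x)$ implies $b\models_2\varphi(x)$. *)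

From Stdlib Require Import Arith.

Inductive form : Type :=
| fbot  : form
| fR    : nat -> nat -> form
| fRbox : nat -> nat -> form
| fRdia : nat -> nat -> form
| fP    : nat -> nat -> form
| fimp  : form -> form -> form
| for_  : form -> form -> form
| fand  : form -> form -> form
| fall  : nat -> form -> form
| fex   : nat -> form -> form.

Fixpoint free_in (v : nat) (phi : form) : Prop :=
  match phi with
  | fbot => False
  | fR a b | fRbox a b | fRdia a b => v = a \/ v = b
  | fP _ a => v = a
  | fimp p q | for_ p q | fand p q => free_in v p \/ free_in v q
  | fall w p | fex w p => v <> w /\ free_in v p
  end.

(* P_n occurs in phi  (Sigma_phi = {R,R_Box,R_Dia} u {P_n : occursP n phi}) *)
Fixpoint occursP (n : nat) (phi : form) : Prop :=
  match phi with
  | fP m _ => n = m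
  | fimp p q | for_ p q | fand p q => occursP n p \/ occursP n q
  | fall _ p | fex _ p => occursP n p
  | _ => False
  end.

(* Models: a universe with interpretations of all letters.  A Theta-model is
   represented by such a structure in which the letters outside Theta are
   simply ignored. *)
Record model : Type := Model {
  dom  : Type;
  rel  : dom -> dom -> Prop;
  rbox : dom -> dom -> Prop;
  rdia : dom -> dom -> Prop;
  pred : nat -> dom -> Prop
}.

Definition update {U : Type} (s : nat -> U) (v : nat) (a : U) : nat -> U :=
  fun w => if Nat.eqb w v then a else s w.

Fixpoint sat (M : model) (s : nat -> dom M) (phi : form) : Prop :=
  match phi with
  | fbot => False
  | fR a b => rel M (s a) (s b)
  | fRbox a b => rbox M (s a) (s b)
  | fRdia a b => rdia M (s a) (s b)
  | fP n a => pred M n (s a)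
  | fimp p q => sat M s p -> sat M s q
  | for_ p q => sat M s p \/ sat M s q
  | fand p q => sat M s p /\ sat M s q
  | fall v p => forall a : dom M, sat M (update s v a) p
  | fex v p => exists a : dom M, sat M (update s v a) p
  end.

Definition holds (M : model) (x : nat) (phi : form) (a : dom M) : Prop :=
  forall s : nat -> dom M, s x = a -> sat M s phi.

Definition log_equiv (phi psi : form) : Prop :=
  forall (M : model) (s : nat -> dom M), sat M s phi <-> sat M s psi.

Inductive mform : Type :=
| mvar : nat -> mform
| mbot : mform
| mand : mform -> mform -> mform
| mor  : mform -> mform -> mform
| mimp : mform -> mform -> mform
| mbox : mform -> mform
| mdia : mform -> mform.

Inductive idx : Type := one | two.

Fixpoint ST (i j : idx) (I : mform) (x : nat) : form :=
  match I with
  | mvar n => fP n x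
  | mbot => fbot
  | mand I1 I2 => fand (ST i j I1 x) (ST i j I2 x)
  | mor I1 I2 => for_ (ST i j I1 x) (ST i j I2 x)
  | mimp I1 I2 =>
      fall (S x) (fimp (fR x (S x)) (fimp (ST i j I1 (S x)) (ST i j I2 (S x))))
  | mbox I1 =>
      match i with
      | one => fall (S x) (fimp (fRbox x (S x)) (ST i j I1 (S x)))
      | two => fall (S x) (fimp (fR x (S x))
                 (fall (S (S x)) (fimp (fRbox (S x) (S (S x))) (ST i j I1 (S (S x))))))
      end
  | mdia I1 =>
      match j with
      | one => fex (S x) (fand (fRdia x (S x)) (ST i j I1 (S x)))
      | two => fall (S x) (fimp (fR x (S x))
                 (fex (S (S x)) (fand (fRdia (S x) (S (S x))) (ST i j I1 (S (S x))))))
      end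
  end.

(* Elements of U_1 and U_2 are tagged: inl a for a in U_1, inr b for b in U_2.
   A relation A on the tagged union with the (type) condition is a subset of
   (U1 x U2) u (U2 x U1). *)
Section Asim.
Variables (M1 M2 : model).
Definition carrier : Type := (dom M1 + dom M2)%type.

Definition sR (p q : carrier) : Prop :=
  match p, q with
  | inl a, inl c => rel M1 a c
  | inr b, inr d => rel M2 b d
  | _, _ => False
  end.
Definition sRbox (p q : carrier) : Prop :=
  match p, q with
  | inl a, inl c => rbox M1 a c
  | inr b, inr d => rbox M2 b d
  | _, _ => False
  end.
Definition sRdia (p q : carrier) : Prop :=
  match p, q with
  | inl a, inl c => rdia M1 a c
  | inr b, inr d => rdia M2 b d
  | _, _ => False
  end.
Definition sP (n : nat) (p : carrier) : Prop :=
  match p with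
  | inl a => pred M1 n a
  | inr b => pred M2 n b
  end.
Definition cross (p q : carrier) : Prop :=
  match p, q with
  | inl _, inr _ | inr _, inl _ => True
  | _, _ => False
  end.

Variable Theta : nat -> Prop.
Variables (t : dom M1) (u : dom M2).

Definition c_type (A : carrier -> carrier -> Prop) : Prop :=
  forall p q, A p q -> cross p q.
Definition c_elem (A : carrier -> carrier -> Prop) : Prop := A (inl t) (inr u).
Definition c_base (A : carrier -> carrier -> Prop) : Prop :=
  forall n a b, Theta n -> A a b -> sP n a -> sP n b.
Definition c_step (A : carrier -> carrier -> Prop) : Prop :=
  forall a b d, A a b -> sR b d -> exists c, sR a c /\ A c d /\ A d c.
Definition c_box2 (A : carrier -> carrier -> Prop) : Prop :=
  forall a b d f, A a b -> sR b d -> sRbox d f ->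
    exists c e, sR a c /\ sRbox c e /\ A e f.
Definition c_box1 (A : carrier -> carrier -> Prop) : Prop :=
  forall a b d, A a b -> sRbox b d -> exists c, sRbox a c /\ A c d.
Definition c_diam1 (A : carrier -> carrier -> Prop) : Prop :=
  forall a b c, A a b -> sRdia a c -> exists d, sRdia b d /\ A c d.
Definition c_diam21 (A B : carrier -> carrier -> Prop) : Prop :=
  forall a b d, A a b -> sR b d -> exists c, sR a c /\ B c d.
Definition c_diam22 (A B : carrier -> carrier -> Prop) : Prop :=
  forall a b c, B a b -> sRdia a c -> exists d, sRdia b d /\ A c d.

Definition c_box (i : idx) (A : carrier -> carrier -> Prop) : Prop :=
  match i with one => c_box1 A | two => c_box2 A end.

(* A is an (i,j)-modal asimulation (for j = 2: A is the first component of
   an (i,2)-modal asimulation (A,B)). *)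
Definition modal_asim (i j : idx) (A : carrier -> carrier -> Prop) : Prop :=
  match j with
  | one => c_type A /\ c_elem A /\ c_base A /\ c_step A /\ c_box i A /\ c_diam1 A
  | two => exists B : carrier -> carrier -> Prop,
      c_type A /\ c_type B /\ c_elem A /\ c_base A /\ c_step A /\ c_box i A
      /\ c_diam21 A B /\ c_diam22 A B
  end.
End Asim.

Arguments carrier : clear implicits.

Definition invariant (i j : idx) (x : nat) (phi : form) : Prop :=
  forall (Theta : nat -> Prop), (forall n, occursP n phi -> Theta n) ->
  forall (M1 M2 : model) (t : dom M1) (u : dom M2)
         (A : carrier M1 M2 -> carrier M1 M2 -> Prop),
    modal_asim M1 M2 Theta t u i j A ->
    forall (a : dom M1) (b : dom M2), A (inl a) (inr b) ->
      holds M1 x phi a -> holds M2 x phi b.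

(* The easy direction is an induction on modal formulas: read inside the disjoint sum of
   the two models, the clauses of an (i,j)-modal asimulation are exactly what is needed to
   push the truth of I from a to b.

   For the converse, consider the modal consequences of phi.  Unless phi is equivalent to
   the conjunction of finitely many of them, Łoś's theorem for ultraproducts over a
   nonprincipal ultrafilter on ℕ yields a point s satisfying all of them but not phi, and
   then a point t satisfying phi whose modal theory is contained in that of s.  Such
   ultraproducts are countably saturated, which makes inclusion of modal theories (together
   with inclusion of the theories of diamond-successors, for j = 2) an (i,j)-modal
   asimulation; invariance then transfers phi from t to s, a contradiction. *)

From Stdlib Require Import Arith Lia List Classical ClassicalEpsilon Cantor.
From mathcomp Require filter.

Lemma sat_agree M phi : forall s s' : nat -> dom M,
  (forall v, free_in v phi -> s v = s' v) -> (sat M s phi <-> sat M s' phi).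
Proof.
  induction phi; intros s s' Hs; simpl in *; try (rewrite !Hs by auto; tauto).
  - tauto.
  - rewrite (IHphi1 s s'), (IHphi2 s s') by auto; tauto.
  - rewrite (IHphi1 s s'), (IHphi2 s s') by auto; tauto.
  - rewrite (IHphi1 s s'), (IHphi2 s s') by auto; tauto.
  - assert (Hu : forall a, sat M (update s n a) phi <-> sat M (update s' n a) phi).
    { intro a; apply IHphi; intros v Hv; unfold update; destruct (Nat.eqb_spec v n); auto. }
    split; intros H a; apply Hu; auto.
  - assert (Hu : forall a, sat M (update s n a) phi <-> sat M (update s' n a) phi).
    { intro a; apply IHphi; intros v Hv; unfold update; destruct (Nat.eqb_spec v n); auto. }
    split; intros [a Ha]; exists a; apply Hu; auto.
Qed.

Lemma holds_of_sat M x phi (s : nat -> dom M) :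
  (forall v, free_in v phi -> v = x) -> sat M s phi -> holds M x phi (s x).
Proof.
  intros Hfree Hs s' Hs'. apply (sat_agree M phi s s'); [|exact Hs].
  intros v Hv. rewrite (Hfree v Hv). congruence.
Qed.

Fixpoint msat (i j : idx) (M : model) (I : mform) (w : dom M) : Prop :=
  match I with
  | mvar n => pred M n w
  | mbot => False
  | mand I1 I2 => msat i j M I1 w /\ msat i j M I2 w
  | mor I1 I2 => msat i j M I1 w \/ msat i j M I2 w
  | mimp I1 I2 => forall v, rel M w v -> msat i j M I1 v -> msat i j M I2 v
  | mbox I1 =>
      match i with
      | one => forall v, rbox M w v -> msat i j M I1 v
      | two => forall v, rel M w v -> forall z, rbox M v z -> msat i j M I1 z
      end
  | mdia I1 =>
      match j with
      | one => exists v, rdia M w v /\ msat i j M I1 v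
      | two => forall v, rel M w v -> exists z, rdia M v z /\ msat i j M I1 z
      end
  end.

Definition dia_sat i j (M : model) (I : mform) (w : dom M) : Prop :=
  exists v, rdia M w v /\ msat i j M I v.

Ltac simpl_update :=
  unfold update in *;
  repeat match goal with
  | H : context [Nat.eqb ?a ?b] |- _ => destruct (Nat.eqb_spec a b); try lia
  | |- context [Nat.eqb ?a ?b] => destruct (Nat.eqb_spec a b); try lia
  end.

Lemma sat_ST i j M I : forall x (s : nat -> dom M),
  sat M s (ST i j I x) <-> msat i j M I (s x).
Proof.
  induction I; intros x s; simpl; try tauto.
  - rewrite IHI1, IHI2; tauto.
  - rewrite IHI1, IHI2; tauto.
  - split; intros H a; specialize (H a); rewrite IHI1, IHI2 in *; simpl_update; auto.
  - destruct i; simpl; split; intros H a; specialize (H a).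
    + rewrite IHI in *; simpl_update; auto.
    + rewrite IHI in *; simpl_update; auto.
    + intros Ha z Hz. simpl_update. specialize (H Ha z Hz). rewrite IHI in H. simpl_update. auto.
    + intros Ha z Hz. rewrite IHI. simpl_update. auto.
  - destruct j; simpl; split.
    + intros [a Ha]; exists a. rewrite IHI in *; simpl_update; auto.
    + intros [a Ha]; exists a. rewrite IHI in *; simpl_update; auto.
    + intros H a Ha. simpl_update.
      destruct (H a Ha) as [z Hz]; exists z. rewrite IHI in Hz. simpl_update. auto.
    + intros H a Ha. simpl_update.
      destruct (H a Ha) as [z Hz]; exists z. rewrite IHI. simpl_update. auto.
Qed.

Definition mtop : mform := mimp mbot mbot.
Definition mands : list mform -> mform := fold_right mand mtop.
Definition mors : list mform -> mform := fold_right mor mbot.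

Lemma msat_mands i j M l w :
  msat i j M (mands l) w <-> Forall (fun I => msat i j M I w) l.
Proof.
  induction l as [|I l IHl]; simpl.
  - split; [constructor | intros _ v _ []].
  - rewrite Forall_cons_iff, <- IHl. tauto.
Qed.

Lemma msat_mors i j M l w :
  msat i j M (mors l) w <-> Exists (fun I => msat i j M I w) l.
Proof.
  induction l as [|I l IHl]; simpl.
  - split; [tauto | intro H; inversion H].
  - rewrite Exists_cons, <- IHl. tauto.
Qed.

Lemma dia_sat_mors i j M l w :
  dia_sat i j M (mors l) w <-> Exists (fun I => dia_sat i j M I w) l.
Proof.
  unfold dia_sat. rewrite Exists_exists. setoid_rewrite msat_mors.
  setoid_rewrite Exists_exists. firstorder.
Qed.

#[local] Arguments to_nat : simpl never.
#[local] Arguments of_nat : simpl never.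

Fixpoint encode (I : mform) : nat :=
  match I with
  | mvar n => to_nat (0, n)
  | mbot => to_nat (1, 0)
  | mand I1 I2 => to_nat (2, to_nat (encode I1, encode I2))
  | mor I1 I2 => to_nat (3, to_nat (encode I1, encode I2))
  | mimp I1 I2 => to_nat (4, to_nat (encode I1, encode I2))
  | mbox I1 => to_nat (5, encode I1)
  | mdia I1 => to_nat (6, encode I1)
  end.

Fixpoint decode (fuel m : nat) : mform :=
  match fuel with
  | 0 => mbot
  | S fuel =>
      let (tag, r) := of_nat m in
      match tag with
      | 0 => mvar r
      | 2 => let (p, q) := of_nat r in mand (decode fuel p) (decode fuel q)
      | 3 => let (p, q) := of_nat r in mor (decode fuel p) (decode fuel q)
      | 4 => let (p, q) := of_nat r in mimp (decode fuel p) (decode fuel q)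
      | 5 => mbox (decode fuel r)
      | 6 => mdia (decode fuel r)
      | _ => mbot
      end
  end.

Fixpoint mdepth (I : mform) : nat :=
  match I with
  | mvar _ | mbot => 1
  | mand I1 I2 | mor I1 I2 | mimp I1 I2 => S (max (mdepth I1) (mdepth I2))
  | mbox I1 | mdia I1 => S (mdepth I1)
  end.

Lemma decode_encode I fuel : mdepth I <= fuel -> decode fuel (encode I) = I.
Proof.
  revert fuel; induction I; intros [|fuel] Hfuel; simpl in *; try lia;
    rewrite ?cancel_of_to; try rewrite IHI1 by lia; try rewrite IHI2 by lia;
    try rewrite IHI by lia; reflexivity.
Qed.

(* Pairing the fuel with the code makes the enumeration surjective. *)
Definition enum_mform (k : nat) : mform := let (fuel, m) := of_nat k in decode fuel m.

Lemma enum_mform_surj I : exists k, enum_mform k = I.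
Proof.
  exists (to_nat (mdepth I, encode I)). unfold enum_mform.
  rewrite cancel_of_to. apply decode_encode, le_n.
Qed.

Definition enum_prefix (G : mform -> Prop) (K : nat) : list mform :=
  filter (fun I => if excluded_middle_informative (G I) then true else false)
    (map enum_mform (seq 0 (S K))).

Lemma enum_prefix_sound G K : Forall G (enum_prefix G K).
Proof.
  apply Forall_forall. intros I HI. apply filter_In in HI as [_ HI].
  destruct (excluded_middle_informative (G I)); [assumption | discriminate].
Qed.

Lemma enum_prefix_complete G K k :
  k <= K -> G (enum_mform k) -> In (enum_mform k) (enum_prefix G K).
Proof.
  intros Hk HG. apply filter_In. split.
  - apply in_map, in_seq. lia.
  - destruct (excluded_middle_informative (G (enum_mform k))); tauto.
Qed.

Record nonprincipal_ultrafilter (U : (nat -> Prop) -> Prop) : Prop := {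
  uf_mono : forall A B : nat -> Prop, (forall n, A n -> B n) -> U A -> U B;
  uf_and : forall A B : nat -> Prop, U A -> U B -> U (fun n => A n /\ B n);
  uf_proper : ~ U (fun _ => False);
  uf_ultra : forall A : nat -> Prop, U A \/ U (fun n => ~ A n);
  uf_cofinite : forall k, U (fun n => k <= n) }.

Arguments uf_mono {U}.
Arguments uf_and {U}.
Arguments uf_proper {U}.
Arguments uf_ultra {U}.
Arguments uf_cofinite {U}.

Lemma nonprincipal_ultrafilter_exists : exists U, nonprincipal_ultrafilter U.
Proof.
  destruct (filter.ultraFilterLemma filter.eventually_filter) as [G [HG Hsub]].
  exists G. constructor.
  - intros A B HAB HA. exact (filter.filterS HAB HA).
  - intros A B HA HB. exact (filter.filterI HA HB).
  - exact (filter.filter_not_empty G).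
  - intro A. exact (filter.in_ultra_setVsetC A HG).
  - intro k. apply Hsub. exists k; [exact Logic.I|].
    intros n Hn. exact (proj2 (Bool.reflect_iff _ _ ssrnat.leP) Hn).
Qed.

Section Ultraproduct.
Variable U : (nat -> Prop) -> Prop.
Hypothesis HU : nonprincipal_ultrafilter U.

Lemma U_true : U (fun _ => True).
Proof. apply (uf_mono HU (fun n => 0 <= n)); [auto | apply (uf_cofinite HU)]. Qed.

Lemma U_ext (A B : nat -> Prop) : (forall n, A n <-> B n) -> (U A <-> U B).
Proof. intro H; split; apply (uf_mono HU); firstorder. Qed.

Lemma U_and A B : U (fun n => A n /\ B n) <-> U A /\ U B.
Proof.
  split.
  - intro H; split; revert H; apply (uf_mono HU); tauto.
  - intros [HA HB]; exact (uf_and HU A B HA HB).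
Qed.

Lemma U_not A : U (fun n => ~ A n) <-> ~ U A.
Proof.
  split.
  - intros HnA HA. apply (uf_proper HU).
    apply (uf_mono HU (fun n => A n /\ ~ A n)); [tauto | apply (uf_and HU); assumption].
  - intro H. destruct (uf_ultra HU A); tauto.
Qed.

Lemma U_or A B : U (fun n => A n \/ B n) <-> U A \/ U B.
Proof.
  split.
  - intro H. destruct (classic (U A)) as [|HA]; [left; assumption | right].
    apply U_not in HA.
    apply (uf_mono HU (fun n => (A n \/ B n) /\ ~ A n)); [tauto | apply (uf_and HU); assumption].
  - intros [H|H]; revert H; apply (uf_mono HU); tauto.
Qed.

Lemma U_imp A B : U (fun n => A n -> B n) <-> (U A -> U B).
Proof.
  rewrite (U_ext _ (fun n => ~ A n \/ B n)) by (intro n; tauto).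
  rewrite U_or, U_not. tauto.
Qed.

Lemma U_const_imp (T : Prop) A : U (fun n => T -> A n) <-> (T -> U A).
Proof.
  destruct (classic T) as [HT|HT].
  - rewrite (U_ext _ A) by tauto. tauto.
  - split; [tauto | intros _].
    apply (uf_mono HU (fun _ => True)); [tauto | exact U_true].
Qed.

Lemma U_forall_le (A : nat -> nat -> Prop) K :
  (forall k, k <= K -> U (A k)) -> U (fun n => forall k, k <= K -> A k n).
Proof.
  induction K as [|K IHK]; intro H.
  - apply (uf_mono HU (A 0)); [|apply H; lia].
    intros n Hn k Hk. replace k with 0 by lia. exact Hn.
  - apply (uf_mono HU (fun n => A (S K) n /\ forall k, k <= K -> A k n)).
    + intros n [H1 H2] k Hk. destruct (Nat.eq_dec k (S K)) as [->|]; auto. apply H2; lia.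
    + apply (uf_and HU); auto.
Qed.

Definition ultraproduct (Ms : nat -> model) : model :=
  Model (forall n, dom (Ms n))
    (fun a b => U (fun n => rel (Ms n) (a n) (b n)))
    (fun a b => U (fun n => rbox (Ms n) (a n) (b n)))
    (fun a b => U (fun n => rdia (Ms n) (a n) (b n)))
    (fun k a => U (fun n => pred (Ms n) k (a n))).

Variable Ms : nat -> model.
Notation P := (ultraproduct Ms).

Theorem los phi : forall s : nat -> dom P,
  sat P s phi <-> U (fun n => sat (Ms n) (fun v => s v n) phi).
Proof.
  induction phi; intro s; simpl; try tauto.
  - split; [tauto | exact (uf_proper HU)].
  - rewrite U_imp, IHphi1, IHphi2; tauto.
  - rewrite U_or, IHphi1, IHphi2; tauto.
  - rewrite U_and, IHphi1, IHphi2; tauto.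
  - assert (E : forall a, sat P (update s n a) phi <->
       U (fun k => sat (Ms k) (update (fun v => s v k) n (a k)) phi)).
    { intro a. rewrite IHphi. apply U_ext. intro k. apply sat_agree.
      intros v _. unfold update. destruct (Nat.eqb v n); reflexivity. }
    split.
    + intro H.
      destruct (uf_ultra HU (fun k => forall a, sat (Ms k) (update (fun v => s v k) n a) phi))
        as [|Hn]; [assumption | exfalso].
      pose (f := fun k => epsilon (inhabits (s n k))
                   (fun a => ~ sat (Ms k) (update (fun v => s v k) n a) phi)).
      specialize (H f). rewrite E in H. apply (uf_proper HU).
      apply (uf_mono HU (fun k => sat (Ms k) (update (fun v => s v k) n (f k)) phi /\
                                  ~ forall a, sat (Ms k) (update (fun v => s v k) n a) phi));
        [|apply (uf_and HU); assumption].
      intros k [Hk Hnk]. apply not_all_ex_not in Hnk. exact (epsilon_spec _ _ Hnk Hk).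
    + intros H a. rewrite E. revert H. apply (uf_mono HU). auto.
  - assert (E : forall a, sat P (update s n a) phi <->
       U (fun k => sat (Ms k) (update (fun v => s v k) n (a k)) phi)).
    { intro a. rewrite IHphi. apply U_ext. intro k. apply sat_agree.
      intros v _. unfold update. destruct (Nat.eqb v n); reflexivity. }
    split.
    + intros [a Ha]. rewrite E in Ha. revert Ha. apply (uf_mono HU). eauto.
    + intro H.
      exists (fun k => epsilon (inhabits (s n k))
                  (fun a => sat (Ms k) (update (fun v => s v k) n a) phi)).
      rewrite E. revert H. apply (uf_mono HU). intros k Hk. exact (epsilon_spec _ _ Hk).
Qed.

Lemma los_msat i j I (w : dom P) :
  msat i j P I w <-> U (fun n => msat i j (Ms n) I (w n)).
Proof.
  rewrite <- (sat_ST i j P I 0 (fun _ => w)), los.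
  apply U_ext. intro n. apply sat_ST.
Qed.

Lemma los_dia_sat i j I (w : dom P) :
  dia_sat i j P I w <-> U (fun n => dia_sat i j (Ms n) I (w n)).
Proof.
  assert (Hdef : forall M (c : dom M), dia_sat i j M I c <->
     sat M (fun _ => c) (fex 1 (fand (fRdia 0 1) (ST i j I 1)))).
  { intros M c. unfold dia_sat. simpl. setoid_rewrite sat_ST. reflexivity. }
  rewrite Hdef, los. apply U_ext. intro n. rewrite Hdef. reflexivity.
Qed.

End Ultraproduct.

(* At coordinate [n] only the first [n] requirements are pursued; this suffices because
   [U] contains every final segment of [nat]. *)
Lemma uf_countable_saturation U (HU : nonprincipal_ultrafilter U)
  (X : nat -> Type) (x0 : forall n, X n) (Q : nat -> forall n, X n -> Prop) :
  (forall K, exists c : forall n, X n, forall k, k <= K -> U (fun n => Q k n (c n))) ->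
  exists g : forall n, X n, forall k, U (fun n => Q k n (g n)).
Proof.
  intro Hfin.
  pose (E := fun n K => exists c : X n, forall k, k <= K -> Q k n c).
  assert (Hcoord : forall n b, exists c : X n,
            forall K, K <= b -> E n K -> forall k, k <= K -> Q k n c).
  { intros n b. induction b as [|b [c Hc]].
    - destruct (classic (E n 0)) as [[c Hc]|H0].
      + exists c. intros K HK _ k Hk. apply Hc. lia.
      + exists (x0 n). intros K HK HE. replace K with 0 in HE by lia. contradiction.
    - destruct (classic (E n (S b))) as [[c' Hc']|Hb].
      + exists c'. intros K HK _ k Hk. apply Hc'. lia.
      + exists c. intros K HK HE.
        destruct (Nat.eq_dec K (S b)) as [->|]; [contradiction | apply Hc; [lia | exact HE]]. }
  exists (fun n => epsilon (inhabits (x0 n))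
            (fun c => forall K, K <= n -> E n K -> forall k, k <= K -> Q k n c)).
  intro k. apply (uf_mono HU (fun n => k <= n /\ E n k)).
  - intros n [Hkn HE]. exact (epsilon_spec _ _ (Hcoord n n) k Hkn HE k (le_n k)).
  - apply (uf_and HU); [apply (uf_cofinite HU)|].
    destruct (Hfin k) as [c Hc].
    apply (uf_mono HU (fun n => forall k', k' <= k -> Q k' n (c n))).
    + intros n Hn. exists (c n). exact Hn.
    + apply U_forall_le; assumption.
Qed.

Lemma Forall_False {A} (Pr : A -> Prop) l : Forall (fun _ => False) l -> Forall Pr l.
Proof. apply Forall_impl. contradiction. Qed.

Lemma not_msat_mors i j M l w :
  ~ msat i j M (mors l) w <-> Forall (fun I => ~ msat i j M I w) l.
Proof. rewrite msat_mors, Forall_Exists_neg. reflexivity. Qed.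

Lemma not_dia_sat_mors i j M l w :
  ~ dia_sat i j M (mors l) w <-> Forall (fun I => ~ dia_sat i j M I w) l.
Proof. rewrite dia_sat_mors, Forall_Exists_neg. reflexivity. Qed.

Definition box_rel (i : idx) (M : model) (a e : dom M) : Prop :=
  match i with
  | one => rbox M a e
  | two => exists c, rel M a c /\ rbox M c e
  end.

Lemma msat_mbox i j M I w :
  msat i j M (mbox I) w <-> forall e, box_rel i M w e -> msat i j M I e.
Proof. destruct i; simpl; firstorder. Qed.

Lemma los_box_rel U (HU : nonprincipal_ultrafilter U) Ms i (a e : dom (ultraproduct U Ms)) :
  box_rel i (ultraproduct U Ms) a e <-> U (fun n => box_rel i (Ms n) (a n) (e n)).
Proof.
  destruct i; [reflexivity|].
  exact (los U HU Ms (fex 2 (fand (fR 0 2) (fRbox 2 1)))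
           (fun v => if Nat.eqb v 0 then a else e)).
Qed.

Definition mtheory_incl i j (M N : model) (a : dom M) (b : dom N) : Prop :=
  forall I, msat i j M I a -> msat i j N I b.

Definition dia_theory_incl i j (M N : model) (a : dom M) (b : dom N) : Prop :=
  forall I, dia_sat i j M I a -> dia_sat i j N I b.

Lemma dia_theory_incl_one i M N a b :
  mtheory_incl i one M N a b -> dia_theory_incl i one M N a b.
Proof. intros H I. exact (H (mdia I)). Qed.

Section SaturatedUltraproduct.
Variable U : (nat -> Prop) -> Prop.
Hypothesis HU : nonprincipal_ultrafilter U.
Variable Ms : nat -> model.
Notation P := (ultraproduct U Ms).
Variable Q : model.
Variables i j : idx.

Lemma ultraproduct_realizes_type (R : forall n, dom (Ms n) -> Prop)
  (F : mform -> dom P -> Prop) (Fn : mform -> forall n, dom (Ms n) -> Prop)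
  (HF : forall I c, F I c <-> U (fun n => Fn I n (c n))) (G D : mform -> Prop) :
  (forall lG lD, Forall G lG -> Forall D lD -> exists c : dom P,
     U (fun n => R n (c n)) /\ Forall (fun I => F I c) lG /\ Forall (fun I => ~ F I c) lD) ->
  exists c : dom P, U (fun n => R n (c n)) /\
    (forall I, G I -> F I c) /\ (forall I, D I -> ~ F I c).
Proof.
  intro Hfin.
  pose (Req := fun k n (x : dom (Ms n)) => R n x /\
          (G (enum_mform k) -> Fn (enum_mform k) n x) /\
          (D (enum_mform k) -> ~ Fn (enum_mform k) n x)).
  assert (Happrox : forall K, exists c : dom P, forall k, k <= K -> U (fun n => Req k n (c n))).
  { intro K.
    destruct (Hfin _ _ (enum_prefix_sound G K) (enum_prefix_sound D K)) as [c [HR [HG HD]]].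
    rewrite Forall_forall in HG, HD.
    exists c. intros k Hk. unfold Req. rewrite !U_and, !U_const_imp, U_not by exact HU.
    split; [exact HR | split; intro Hk'; rewrite <- HF].
    - apply HG, enum_prefix_complete; assumption.
    - apply HD, enum_prefix_complete; assumption. }
  destruct (Happrox 0) as [c0 _].
  destruct (uf_countable_saturation U HU _ c0 Req Happrox) as [g Hg].
  exists g. split; [|split].
  - generalize (Hg 0). apply (uf_mono HU). intros n H. apply H.
  - intros I HI. destruct (enum_mform_surj I) as [k <-]. apply HF.
    generalize (Hg k). apply (uf_mono HU). intros n H. apply H, HI.
  - intros I HI. destruct (enum_mform_surj I) as [k <-]. rewrite HF, <- U_not by exact HU.
    generalize (Hg k). apply (uf_mono HU). intros n H. apply H, HI.
Qed.

Lemma ultraproduct_step (p : dom P) (q d : dom Q) :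
  mtheory_incl i j P Q p q -> rel Q q d ->
  exists c : dom P, rel P p c /\ mtheory_incl i j P Q c d /\ mtheory_incl i j Q P d c.
Proof.
  intros Hpq Hqd.
  destruct (ultraproduct_realizes_type (fun n => rel (Ms n) (p n))
              (msat i j P) (fun I n => msat i j (Ms n) I) (los_msat U HU Ms i j)
              (fun I => msat i j Q I d) (fun I => ~ msat i j Q I d)) as [c [Hpc [HG HD]]].
  - intros lG lD HlG HlD. apply NNPP; intro Hnone.
    assert (Himp : msat i j P (mimp (mands lG) (mors lD)) p).
    { intros v Hpv HvG. apply NNPP; intro HvD. apply Hnone. exists v.
      split; [exact Hpv | split; [apply msat_mands, HvG | apply not_msat_mors, HvD]]. }
    apply (proj2 (not_msat_mors i j Q lD d) HlD).
    exact (Hpq _ Himp d Hqd (proj2 (msat_mands i j Q lG d) HlG)).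
  - exists c. split; [exact Hpc | split; [|exact HG]].
    intros I HcI. apply NNPP; intro HdI. exact (HD I HdI HcI).
Qed.

Lemma ultraproduct_box (p : dom P) (q d : dom Q) :
  mtheory_incl i j P Q p q -> box_rel i Q q d ->
  exists c : dom P, box_rel i P p c /\ mtheory_incl i j P Q c d.
Proof.
  intros Hpq Hqd.
  destruct (ultraproduct_realizes_type (fun n => box_rel i (Ms n) (p n))
              (msat i j P) (fun I n => msat i j (Ms n) I) (los_msat U HU Ms i j)
              (fun _ => False) (fun I => ~ msat i j Q I d)) as [c [Hpc [_ HD]]].
  - intros lG lD HlG HlD. apply NNPP; intro Hnone.
    assert (Hbox : msat i j P (mbox (mors lD)) p).
    { apply msat_mbox. intros v Hpv. apply NNPP; intro HvD. apply Hnone. exists v.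
      split; [apply (los_box_rel U HU), Hpv |].
      split; [apply Forall_False, HlG | apply not_msat_mors, HvD]. }
    apply (proj2 (not_msat_mors i j Q lD d) HlD).
    exact (proj1 (msat_mbox i j Q _ q) (Hpq _ Hbox) d Hqd).
  - exists c. split; [apply (los_box_rel U HU), Hpc |].
    intros I HcI. apply NNPP; intro HdI. exact (HD I HdI HcI).
Qed.

Lemma ultraproduct_dia (a c : dom Q) (b : dom P) :
  dia_theory_incl i j Q P a b -> rdia Q a c ->
  exists d : dom P, rdia P b d /\ mtheory_incl i j Q P c d.
Proof.
  intros Hab Hac.
  destruct (ultraproduct_realizes_type (fun n => rdia (Ms n) (b n))
              (msat i j P) (fun I n => msat i j (Ms n) I) (los_msat U HU Ms i j)
              (fun I => msat i j Q I c) (fun _ => False)) as [d [Hbd [HG _]]].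
  - intros lG lD HlG HlD.
    destruct (Hab (mands lG)) as [d [Hbd Hd]].
    { exists c. split; [exact Hac | apply msat_mands, HlG]. }
    exists d. split; [exact Hbd | split; [apply msat_mands, Hd | apply Forall_False, HlD]].
  - exists d. split; [exact Hbd | exact HG].
Qed.

Lemma ultraproduct_step_dia (p : dom P) (q d : dom Q) :
  mtheory_incl i two P Q p q -> rel Q q d ->
  exists c : dom P, rel P p c /\ dia_theory_incl i two P Q c d.
Proof.
  intros Hpq Hqd.
  destruct (ultraproduct_realizes_type (fun n => rel (Ms n) (p n))
              (dia_sat i two P) (fun I n => dia_sat i two (Ms n) I) (los_dia_sat U HU Ms i two)
              (fun _ => False) (fun I => ~ dia_sat i two Q I d)) as [c [Hpc [_ HD]]].
  - intros lG lD HlG HlD. apply NNPP; intro Hnone.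
    assert (Hdia : msat i two P (mdia (mors lD)) p).
    { intros v Hpv. change (dia_sat i two P (mors lD) v). apply NNPP; intro HvD.
      apply Hnone. exists v.
      split; [exact Hpv | split; [apply Forall_False, HlG | apply not_dia_sat_mors, HvD]]. }
    exact (proj2 (not_dia_sat_mors i two Q lD d) HlD (Hpq _ Hdia d Hqd)).
  - exists c. split; [exact Hpc|].
    intros I HcI. apply NNPP; intro HdI. exact (HD I HdI HcI).
Qed.

End SaturatedUltraproduct.

Definition sum_rel {X Y} (R1 : X -> X -> Prop) (R2 : Y -> Y -> Prop) (p q : X + Y) : Prop :=
  match p, q with
  | inl a, inl c => R1 a c
  | inr b, inr d => R2 b d
  | _, _ => False
  end.

Definition sum_model (M1 M2 : model) : model :=
  Model (carrier M1 M2) (sR M1 M2) (sRbox M1 M2) (sRdia M1 M2) (sP M1 M2).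

Definition succ_image {X Y} (f : X -> Y) (RX : X -> X -> Prop) (RY : Y -> Y -> Prop) : Prop :=
  forall a y, RY (f a) y <-> exists v, y = f v /\ RX a v.

Lemma succ_image_inl {X Y} (R1 : X -> X -> Prop) (R2 : Y -> Y -> Prop) :
  succ_image inl R1 (sum_rel R1 R2).
Proof.
  intros a [c|c]; simpl; split; [eauto | | tauto |].
  - intros (v & Hv & H). injection Hv as ->. exact H.
  - intros (v & Hv & _). discriminate.
Qed.

Lemma succ_image_inr {X Y} (R1 : X -> X -> Prop) (R2 : Y -> Y -> Prop) :
  succ_image inr R2 (sum_rel R1 R2).
Proof.
  intros b [d|d]; simpl; split; [tauto | | eauto |].
  - intros (v & Hv & _). discriminate.
  - intros (v & Hv & H). injection Hv as ->. exact H.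
Qed.

Lemma forall_succ_image {X Y} (f : X -> Y) RX RY (Hf : succ_image f RX RY) a (Phi : Y -> Prop) :
  (forall y, RY (f a) y -> Phi y) <-> (forall v, RX a v -> Phi (f v)).
Proof.
  split; intro H.
  - intros v Hv. apply H, Hf. eauto.
  - intros y Hy. apply Hf in Hy as (v & -> & Hv). auto.
Qed.

Lemma exists_succ_image {X Y} (f : X -> Y) RX RY (Hf : succ_image f RX RY) a (Phi : Y -> Prop) :
  (exists y, RY (f a) y /\ Phi y) <-> (exists v, RX a v /\ Phi (f v)).
Proof.
  split.
  - intros (y & Hy & H). apply Hf in Hy as (v & -> & Hv). eauto.
  - intros (v & Hv & H). exists (f v). split; [apply Hf; eauto | exact H].
Qed.

Record generated_embedding (N M : model) (f : dom N -> dom M) : Prop := {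
  ge_pred : forall n a, pred M n (f a) <-> pred N n a;
  ge_rel : succ_image f (rel N) (rel M);
  ge_rbox : succ_image f (rbox N) (rbox M);
  ge_rdia : succ_image f (rdia N) (rdia M) }.

Lemma msat_generated_embedding i j N M f (Hf : generated_embedding N M f) I :
  forall a, msat i j M I (f a) <-> msat i j N I a.
Proof.
  induction I; intro a; simpl.
  - apply (ge_pred _ _ _ Hf).
  - reflexivity.
  - rewrite IHI1, IHI2. reflexivity.
  - rewrite IHI1, IHI2. reflexivity.
  - rewrite (forall_succ_image _ _ _ (ge_rel _ _ _ Hf)).
    setoid_rewrite IHI1. setoid_rewrite IHI2. reflexivity.
  - destruct i.
    + rewrite (forall_succ_image _ _ _ (ge_rbox _ _ _ Hf)). setoid_rewrite IHI. reflexivity.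
    + rewrite (forall_succ_image _ _ _ (ge_rel _ _ _ Hf)).
      setoid_rewrite (forall_succ_image _ _ _ (ge_rbox _ _ _ Hf)).
      setoid_rewrite IHI. reflexivity.
  - destruct j.
    + rewrite (exists_succ_image _ _ _ (ge_rdia _ _ _ Hf)). setoid_rewrite IHI. reflexivity.
    + rewrite (forall_succ_image _ _ _ (ge_rel _ _ _ Hf)).
      setoid_rewrite (exists_succ_image _ _ _ (ge_rdia _ _ _ Hf)).
      setoid_rewrite IHI. reflexivity.
Qed.

Lemma inl_generated_embedding M1 M2 : generated_embedding M1 (sum_model M1 M2) inl.
Proof.
  constructor; [reflexivity | exact (succ_image_inl (rel M1) (rel M2))
    | exact (succ_image_inl (rbox M1) (rbox M2)) | exact (succ_image_inl (rdia M1) (rdia M2))].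
Qed.

Lemma inr_generated_embedding M1 M2 : generated_embedding M2 (sum_model M1 M2) inr.
Proof.
  constructor; [reflexivity | exact (succ_image_inr (rel M1) (rel M2))
    | exact (succ_image_inr (rbox M1) (rbox M2)) | exact (succ_image_inr (rdia M1) (rdia M2))].
Qed.

Lemma asim_transfer i j (M1 M2 : model) (A : carrier M1 M2 -> carrier M1 M2 -> Prop)
  (Hbase : forall n p q, A p q -> sP M1 M2 n p -> sP M1 M2 n q)
  (Hstep : c_step M1 M2 A) (Hbox : c_box M1 M2 i A)
  (Hdia : match j with
          | one => c_diam1 M1 M2 A
          | two => exists B, c_diam21 M1 M2 A B /\ c_diam22 M1 M2 A B
          end) :
  forall I p q, A p q -> msat i j (sum_model M1 M2) I p -> msat i j (sum_model M1 M2) I q.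
Proof.
  induction I; intros a b Hab; simpl.
  - apply Hbase; assumption.
  - tauto.
  - intros [H1 H2]; split; eauto.
  - intros [H1|H2]; [left|right]; eauto.
  - intros H d Hbd Hd. destruct (Hstep a b d Hab Hbd) as (c & Hac & Hcd & Hdc).
    apply (IHI2 c d Hcd), H; [exact Hac | exact (IHI1 d c Hdc Hd)].
  - destruct i; simpl in Hbox.
    + intros H d Hbd. destruct (Hbox a b d Hab Hbd) as (c & Hac & Hcd). eauto.
    + intros H d Hbd f Hdf.
      destruct (Hbox a b d f Hab Hbd Hdf) as (c & e & Hac & Hce & Hef). eauto.
  - destruct j.
    + intros (c & Hac & Hc). destruct (Hdia a b c Hab Hac) as (d & Hbd & Hcd). eauto.
    + destruct Hdia as (B & H21 & H22). intros H d Hbd.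
      destruct (H21 a b d Hab Hbd) as (c & Hac & Bcd). destruct (H c Hac) as (e & Hce & He).
      destruct (H22 c d e Bcd Hce) as (f & Hdf & Hef). eauto.
Qed.

(* Forgetting the unary letters outside [Th] is what turns the [base] condition,
   which only speaks about letters of [Th], into an unconditional one. *)
Definition restrict_preds (M : model) (Th : nat -> Prop) : model :=
  Model (dom M) (rel M) (rbox M) (rdia M) (fun n w => Th n /\ pred M n w).

Lemma sat_restrict_preds M Th phi : (forall n, occursP n phi -> Th n) ->
  forall s : nat -> dom M, sat (restrict_preds M Th) s phi <-> sat M s phi.
Proof.
  induction phi; intros HTh s; simpl in *; try tauto.
  - split; [tauto | split; auto].
  - rewrite IHphi1, IHphi2 by auto; tauto.
  - rewrite IHphi1, IHphi2 by auto; tauto.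
  - rewrite IHphi1, IHphi2 by auto; tauto.
  - split; intros H a; specialize (H a); rewrite IHphi in *; auto.
  - split; intros [a H]; exists a; rewrite IHphi in *; auto.
Qed.

Lemma modal_asim_transfer i j M1 M2 Th t u A :
  modal_asim M1 M2 Th t u i j A ->
  forall I p q, A p q ->
    msat i j (sum_model (restrict_preds M1 Th) (restrict_preds M2 Th)) I p ->
    msat i j (sum_model (restrict_preds M1 Th) (restrict_preds M2 Th)) I q.
Proof.
  intro HA.
  assert (Hbase : c_base M1 M2 Th A -> forall n p q, A p q ->
            sP (restrict_preds M1 Th) (restrict_preds M2 Th) n p ->
            sP (restrict_preds M1 Th) (restrict_preds M2 Th) n q).
  { intros Hb n [p|p] [q|q] Hpq [Hn Hp]; split; auto; exact (Hb n _ _ Hn Hpq Hp). }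
  destruct j; simpl in HA.
  - destruct HA as (_ & _ & Hb & Hst & Hbx & Hd).
    exact (asim_transfer i one (restrict_preds M1 Th) (restrict_preds M2 Th) A
             (Hbase Hb) Hst Hbx Hd).
  - destruct HA as (B & _ & _ & _ & Hb & Hst & Hbx & H21 & H22).
    exact (asim_transfer i two (restrict_preds M1 Th) (restrict_preds M2 Th) A
             (Hbase Hb) Hst Hbx (ex_intro _ B (conj H21 H22))).
Qed.

Lemma invariant_of_ST_equiv i j x phi I :
  log_equiv phi (ST i j I x) -> invariant i j x phi.
Proof.
  intros Hequiv Th HTh M1 M2 t u A HA a b Hab Ha s Hs.
  pose (N1 := restrict_preds M1 Th). pose (N2 := restrict_preds M2 Th).
  assert (Ha' : msat i j (sum_model N1 N2) I (inl a)).
  { apply (msat_generated_embedding i j _ _ _ (inl_generated_embedding N1 N2)).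
    rewrite <- (sat_ST i j N1 I x (fun _ => a)).
    apply Hequiv, (sat_restrict_preds M1 Th phi HTh), Ha. reflexivity. }
  apply (sat_restrict_preds M2 Th phi HTh), Hequiv, sat_ST. rewrite Hs.
  apply (msat_generated_embedding i j _ _ _ (inr_generated_embedding N1 N2)).
  exact (modal_asim_transfer i j M1 M2 Th t u A HA I _ _ Hab Ha').
Qed.

Definition theory_rel (Incl : forall M N : model, dom M -> dom N -> Prop)
  (M1 M2 : model) (p q : carrier M1 M2) : Prop :=
  match p, q with
  | inl a, inr b => Incl M1 M2 a b
  | inr b, inl a => Incl M2 M1 b a
  | _, _ => False
  end.

Lemma theory_rel_type Incl M1 M2 : c_type M1 M2 (theory_rel Incl M1 M2).
Proof. intros [p|p] [q|q]; simpl; tauto. Qed.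

Lemma theory_rel_base i j M1 M2 Th :
  c_base M1 M2 Th (theory_rel (mtheory_incl i j) M1 M2).
Proof. intros n [p|p] [q|q] _ Hpq; simpl in *; try contradiction; exact (Hpq (mvar n)). Qed.

Section TheoryAsimulation.
Variable U : (nat -> Prop) -> Prop.
Hypothesis HU : nonprincipal_ultrafilter U.
Variables Ns Ms : nat -> model.
Notation N := (ultraproduct U Ns).
Notation M := (ultraproduct U Ms).
Variable i : idx.

Lemma theory_rel_step j : c_step N M (theory_rel (mtheory_incl i j) N M).
Proof.
  intros [p|p] [q|q] [d|d] Hpq Hqd; simpl in *; try contradiction.
  - destruct (ultraproduct_step U HU Ns M i j p q d Hpq Hqd) as [c Hc]. exists (inl c). exact Hc.
  - destruct (ultraproduct_step U HU Ms N i j p q d Hpq Hqd) as [c Hc]. exists (inr c). exact Hc.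
Qed.

Lemma theory_rel_box j : c_box N M i (theory_rel (mtheory_incl i j) N M).
Proof.
  destruct i; simpl.
  - intros [p|p] [q|q] [d|d] Hpq Hqd; simpl in *; try contradiction.
    + destruct (ultraproduct_box U HU Ns M one j p q d Hpq Hqd) as [c Hc]. exists (inl c). exact Hc.
    + destruct (ultraproduct_box U HU Ms N one j p q d Hpq Hqd) as [c Hc]. exists (inr c). exact Hc.
  - intros [p|p] [q|q] [d|d] [f|f] Hpq Hqd Hdf; simpl in *; try contradiction.
    + destruct (ultraproduct_box U HU Ns M two j p q f Hpq (ex_intro _ d (conj Hqd Hdf)))
        as (e & (c & Hpc & Hce) & Hef).
      exists (inl c), (inl e). auto.
    + destruct (ultraproduct_box U HU Ms N two j p q f Hpq (ex_intro _ d (conj Hqd Hdf)))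
        as (e & (c & Hpc & Hce) & Hef).
      exists (inr c), (inr e). auto.
Qed.

Lemma theory_rel_diam1 : c_diam1 N M (theory_rel (mtheory_incl i one) N M).
Proof.
  intros [p|p] [q|q] [c|c] Hpq Hpc; simpl in *; try contradiction.
  - destruct (ultraproduct_dia U HU Ms N i one p c q (dia_theory_incl_one _ _ _ _ _ Hpq) Hpc)
      as [d Hd].
    exists (inr d). exact Hd.
  - destruct (ultraproduct_dia U HU Ns M i one p c q (dia_theory_incl_one _ _ _ _ _ Hpq) Hpc)
      as [d Hd].
    exists (inl d). exact Hd.
Qed.

Lemma theory_rel_diam21 :
  c_diam21 N M (theory_rel (mtheory_incl i two) N M) (theory_rel (dia_theory_incl i two) N M).
Proof.
  intros [p|p] [q|q] [d|d] Hpq Hqd; simpl in *; try contradiction.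
  - destruct (ultraproduct_step_dia U HU Ns M i p q d Hpq Hqd) as [c Hc]. exists (inl c). exact Hc.
  - destruct (ultraproduct_step_dia U HU Ms N i p q d Hpq Hqd) as [c Hc]. exists (inr c). exact Hc.
Qed.

Lemma theory_rel_diam22 :
  c_diam22 N M (theory_rel (mtheory_incl i two) N M) (theory_rel (dia_theory_incl i two) N M).
Proof.
  intros [p|p] [q|q] [c|c] Hpq Hpc; simpl in *; try contradiction.
  - destruct (ultraproduct_dia U HU Ms N i two p c q Hpq Hpc) as [d Hd]. exists (inr d). exact Hd.
  - destruct (ultraproduct_dia U HU Ns M i two p c q Hpq Hpc) as [d Hd]. exists (inl d). exact Hd.
Qed.

Lemma theory_rel_modal_asim j Th (t : dom N) (u : dom M) :
  mtheory_incl i j N M t u -> modal_asim N M Th t u i j (theory_rel (mtheory_incl i j) N M).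
Proof.
  intro Htu. destruct j; simpl.
  - repeat split; auto using theory_rel_type, theory_rel_base, theory_rel_step,
      theory_rel_box, theory_rel_diam1.
  - exists (theory_rel (dia_theory_incl i two) N M).
    repeat split; auto using theory_rel_type, theory_rel_base, theory_rel_step,
      theory_rel_box, theory_rel_diam21, theory_rel_diam22.
Qed.

End TheoryAsimulation.

Definition modal_consequence i j x phi (I : mform) : Prop :=
  forall (M : model) (s : nat -> dom M), sat M s phi -> msat i j M I (s x).

Lemma choose_pointed_models (Pm : nat -> forall M : model, (nat -> dom M) -> Prop) :
  (forall n, exists M s, Pm n M s) ->
  exists (Ms : nat -> model) (ss : forall n, nat -> dom (Ms n)), forall n, Pm n (Ms n) (ss n).
Proof.
  intro H.
  pose (choose := fun n => constructive_indefinite_description _ (H n)).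
  exists (fun n => proj1_sig (choose n)).
  exists (fun n => proj1_sig (constructive_indefinite_description _ (proj2_sig (choose n)))).
  intro n. exact (proj2_sig (constructive_indefinite_description _ (proj2_sig (choose n)))).
Qed.

(* Factor [n] refutes [phi] but satisfies the consequences among [enum_mform 0..n]. *)
Lemma ultraproduct_consequences_not_phi U (HU : nonprincipal_ultrafilter U) i j x phi :
  ~ (exists I, log_equiv phi (ST i j I x)) ->
  exists (Ms : nat -> model) (s : nat -> dom (ultraproduct U Ms)),
    ~ sat _ s phi /\ forall I, modal_consequence i j x phi I -> msat i j _ I (s x).
Proof.
  intro Hundef.
  pose (Cons := modal_consequence i j x phi).
  assert (Hn : forall n, exists M (s : nat -> dom M),
             msat i j M (mands (enum_prefix Cons n)) (s x) /\ ~ sat M s phi).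
  { intro n. apply NNPP; intro Hnone. apply Hundef. exists (mands (enum_prefix Cons n)).
    intros M s. rewrite sat_ST, msat_mands. split.
    - intro Hs. apply (Forall_impl _ (fun I HI => HI M s Hs)), enum_prefix_sound.
    - intro HI. apply NNPP; intro Hs. apply Hnone. exists M, s.
      rewrite msat_mands. auto. }
  destruct (choose_pointed_models _ Hn) as (Ms & ss & Hss).
  exists Ms, (fun v n => ss n v). split.
  - rewrite los by exact HU. intro H. apply (uf_proper HU). revert H. apply (uf_mono HU).
    intros n Hsat. exact (proj2 (Hss n) Hsat).
  - intros I HI. destruct (enum_mform_surj I) as [k <-]. apply los_msat; [exact HU|].
    apply (uf_mono HU (fun n => k <= n)); [|apply (uf_cofinite HU)].
    intros n Hkn. destruct (Hss n) as [Hc _]. rewrite msat_mands, Forall_forall in Hc.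
    apply Hc, enum_prefix_complete; assumption.
Qed.

(* Factor [n] satisfies [phi] and refutes those of [enum_mform 0..n] that fail at [w]. *)
Lemma ultraproduct_phi_below U (HU : nonprincipal_ultrafilter U) i j x phi (M : model) (w : dom M) :
  (forall I, modal_consequence i j x phi I -> msat i j M I w) ->
  exists (Ns : nat -> model) (t : nat -> dom (ultraproduct U Ns)),
    sat _ t phi /\ mtheory_incl i j _ M (t x) w.
Proof.
  intro Hcons.
  pose (Fails := fun I => ~ msat i j M I w).
  assert (Hn : forall n, exists N (t : nat -> dom N),
             sat N t phi /\ ~ msat i j N (mors (enum_prefix Fails n)) (t x)).
  { intro n. apply NNPP; intro Hnone.
    apply (proj2 (not_msat_mors i j M _ w) (enum_prefix_sound Fails n)), Hcons.
    intros N t Ht. apply NNPP; intro H. apply Hnone. exists N, t. auto. }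
  destruct (choose_pointed_models _ Hn) as (Ns & ts & Hts).
  exists Ns, (fun v n => ts n v). split.
  - apply los; [exact HU|]. apply (uf_mono HU (fun _ => True)); [|exact (U_true U HU)].
    intros n _. exact (proj1 (Hts n)).
  - intros I HI. destruct (enum_mform_surj I) as [k <-]. apply NNPP; intro Hk.
    apply los_msat in HI; [|exact HU]. apply (uf_proper HU).
    apply (uf_mono HU (fun n => k <= n /\ msat i j (Ns n) (enum_mform k) (ts n x)));
      [|apply (uf_and HU); [apply (uf_cofinite HU) | exact HI]].
    intros n [Hkn Hnk]. apply (proj2 (Hts n)), msat_mors, Exists_exists.
    exists (enum_mform k). split; [apply enum_prefix_complete|]; assumption.
Qed.

Lemma ST_equiv_of_invariant i j x phi (Hfree : forall v, free_in v phi -> v = x) :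
  invariant i j x phi -> exists I, log_equiv phi (ST i j I x).
Proof.
  intro Hinv. destruct nonprincipal_ultrafilter_exists as [U HU].
  apply NNPP; intro Hundef.
  destruct (ultraproduct_consequences_not_phi U HU i j x phi Hundef) as (Ms & s & Hs & Hcons).
  destruct (ultraproduct_phi_below U HU i j x phi _ (s x) Hcons) as (Ns & t & Ht & Hincl).
  apply Hs, (Hinv (fun _ => True) (fun _ _ => Logic.I) _ _ (t x) (s x) _
               (theory_rel_modal_asim U HU Ns Ms i j _ _ _ Hincl) _ _ Hincl);
    [apply holds_of_sat|]; auto.
Qed.

Theorem theorem2 (i j : idx) (x : nat) (phi : form)
  (Hfree : forall v, free_in v phi -> v = x) :
  (exists I : mform, log_equiv phi (ST i j I x)) <-> invariant i j x phi.
Proof.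
  split.
  - intros [I HI]. exact (invariant_of_ST_equiv i j x phi I HI).
  - exact (ST_equiv_of_invariant i j x phi Hfree).
Qed.
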